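(* Let $K\ge 3$, $T\subseteq[K]$ with $|T|=N$, let ${\bm{x}}_1,\dots,{\bm{x}}_K\in\mathbb{R}^d$ and $z_1,\dots,z_K\in\mathbb{R}$, and suppose there is ${\bm{a}}\in\mathbb{R}^d$ with ${\bm{a}}^T{\bm{x}}_1 < {\bm{a}}^T{\bm{x}}_2 < \cdots < {\bm{a}}^T{\bm{x}}_K$. Then there exist $m$ with $$ m \le K-1-\sum_{P\in\mathcal{P}([K]\setminus T)} \max\{|P|-2,0\}$$ and parameters ${\bm{W}}_2\in\mathbb{R}^{1\times m}$, ${\bm{b}}_1\in\mathbb{R}^m$, $b_2\in\mathbb{R}$ such that the network $g({\bm{x}}) = {\bm{W}}_2\sigma(\mathbf{1}_m{\bm{a}}^T{\bm{x}} + {\bm{b}}_1)+b_2$ satisfies $g({\bm{x}}_i)=z_i$ for all $i\in T$ and $g({\bm{x}}_i)=0$ for all $i\in[K]\setminus T$.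
   Context: $[K]=\{1,\dots,K\}$; $\sigma(t)=\max\{t,0\}$ applied coordinatewise; $\mathbf{1}_m\in\mathbb{R}^m$ is the all-ones vector. For $I\subseteq[K]$, the consecutive partition $\mathcal{P}(I)$ is the partition of $I$ into maximal subsets of consecutive integers (e.g. $\mathcal{P}(\{1,2,3,5,6,8,10,11,12,13\}) = \{\{1,2,3\},\{5,6\},\{8\},\{10,11,12,13\}\}$). *)

(* Indices [K] = {1..K} are represented by 'I_K = {0..K-1}. *)
From mathcomp Require Import all_boot all_order all_algebra.
Set Implicit Arguments. Unset Strict Implicit. Unset Printing Implicit Defensive.
Import Order.TTheory GRing.Theory Num.Theory.
Local Open Scope ring_scope.

Definition relu (R : realFieldType) (t : R) : R := Num.max t 0.

Definition dotv (R : realFieldType) (d : nat) (a x : 'cV[R]_d) : R :=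
  (a^T *m x) 0 0.

Definition net (R : realFieldType) (d m : nat) (a : 'cV[R]_d)
  (W2 : 'M[R]_(1, m)) (b1 : 'cV[R]_m) (b2 : R) (x : 'cV[R]_d) : R :=
  \sum_(j < m) W2 0 j * relu (dotv a x + b1 j 0) + b2.

Definition consecutive (K : nat) (P : {set 'I_K}) : bool :=
  [forall i : 'I_K, forall j : 'I_K, forall k : 'I_K,
     (i \in P) ==> (k \in P) ==> ((i <= j)%N && (j <= k)%N) ==> (j \in P)].

Definition consec_partition (K : nat) (I : {set 'I_K}) : {set {set 'I_K}} :=
  [set P : {set 'I_K} | [&& P != set0, P \subset I, consecutive P &
     [forall Q : {set 'I_K}, ((P \subset Q) && (Q \subset I) && consecutive Q)
        ==> (Q == P)]]].

(* Project the points on [a]: t_1 < ... < t_K.  The piecewise linear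
   interpolant of the targets (z on T, 0 off T) is
   y_1 + sum_j c_j relu (t - t_j), where c_j is the change of slope at t_j;
   this is a network with one neuron per nonzero c_j, j < K.  If j is an
   interior point of a block of consecutive indices outside T, the targets
   vanish at j-1, j, j+1, so c_j = 0.  A block P has at least |P| - 2 interior
   points and distinct blocks are disjoint, which bounds the width. *)

From mathcomp Require Import all_boot all_order all_algebra.
From mathcomp Require Import zify ring.
Set Implicit Arguments. Unset Strict Implicit. Unset Printing Implicit Defensive.
Import Order.TTheory GRing.Theory Num.Theory.

Section ConsecutivePartition.
Variable K : nat.
Implicit Types (I P Q : {set 'I_K}).

Lemma consecutiveP P :
  reflect (forall i j k : 'I_K, i \in P -> k \in P -> (i <= j <= k)%N -> j \in P)
          (consecutive P).
Proof.
apply: (iffP forallP) => [cP i j k iP kP /andP[ij jk] | cP i].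
  by move: (cP i) => /forallP/(_ j)/forallP/(_ k); rewrite iP kP ij jk.
by apply/forallP => j; apply/forallP => k; apply/implyP => iP; apply/implyP => kP;
  apply/implyP; exact: cP.
Qed.

Lemma consec_partitionP I P : P \in consec_partition I ->
  [/\ P \subset I, consecutive P &
     forall Q, P \subset Q -> Q \subset I -> consecutive Q -> Q = P].
Proof.
rewrite inE => /and4P[_ PI cP /forallP maxP]; split => // Q PQ QI cQ.
by apply/eqP; move: (maxP Q); rewrite PQ QI cQ.
Qed.

Lemma consecutiveU P Q c : consecutive P -> consecutive Q -> c \in P -> c \in Q ->
  consecutive (P :|: Q).
Proof.
move=> /consecutiveP cP /consecutiveP cQ cinP cinQ.
apply/consecutiveP => i j k /setUP iPQ /setUP kPQ /andP[ij jk]; apply/setUP.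
have [jc | cj] := leqP j c.
- case: iPQ => [iP | iQ]; [left; apply: (cP i _ c) | right; apply: (cQ i _ c)];
    by rewrite ?ij.
- case: kPQ => [kP | kQ]; [left; apply: (cP c _ k) | right; apply: (cQ c _ k)];
    by rewrite ?jk ?(ltnW cj).
Qed.

Lemma consec_partition_eq I P Q c : P \in consec_partition I ->
  Q \in consec_partition I -> c \in P -> c \in Q -> P = Q.
Proof.
move=> /consec_partitionP[PI cP maxP] /consec_partitionP[QI cQ maxQ] cinP cinQ.
have PQ_I : P :|: Q \subset I by rewrite subUset PI QI.
have cPQ := consecutiveU cP cQ cinP cinQ.
by rewrite -(maxP _ (subsetUl P Q) PQ_I cPQ) (maxQ _ (subsetUr P Q) PQ_I cPQ).
Qed.

Definition inner P : {set 'I_K} :=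
  [set j in P | [exists i in P, (i < j)%N] && [exists k in P, (j < k)%N]].

Lemma card_extremal P (r : rel 'I_K) : (forall u v, u != v -> r u v || r v u) ->
  (#|[set j in P | ~~ [exists i in P, r i j]]| <= 1)%N.
Proof.
move=> r_total; apply/card_le1_eqP => u v; rewrite !inE.
move=> /andP[uP /existsP nu] /andP[vP /existsP nv]; apply/eqP/contraT => /r_total.
by case/orP => r_vu; [case: nu; exists v | case: nv; exists u]; rewrite ?uP ?vP.
Qed.

Lemma card_inner P : (#|P| - 2 <= #|inner P|)%N.
Proof.
set Lo := [set j in P | ~~ [exists i in P, (i < j)%N]].
set Hi := [set j in P | ~~ [exists i in P, (j < i)%N]].
have ltn_total (u v : 'I_K) : u != v -> (u < v)%N || (v < u)%N.
  by rewrite -(inj_eq val_inj) neq_ltn.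
have cLo : (#|Lo| <= 1)%N by apply: card_extremal.
have cHi : (#|Hi| <= 1)%N by apply: card_extremal => u v /ltn_total; rewrite orbC.
have P_sub : P \subset inner P :|: (Lo :|: Hi).
  apply/subsetP => j jP; rewrite !inE jP /=.
  by case: [exists i in P, _]; case: [exists i in P, _].
have := leq_trans (subset_leq_card P_sub) (leq_card_setU _ _).1.
have := (leq_card_setU Lo Hi).1; lia.
Qed.

Lemma sum_consec_partition_le I :
  (\sum_(P in consec_partition I) (#|P| - 2) <=
   #|\bigcup_(P in consec_partition I) inner P|)%N.
Proof.
pose F P := if P \in consec_partition I then inner P else set0.
have F_disj P Q : P != Q -> [disjoint F P & F Q].
  rewrite /F -setI_eq0; case: ifP => Pp; case: ifP => Qp nPQ;
    rewrite ?setI0 ?set0I //.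
  apply/set0Pn => -[c]; rewrite !inE => /andP[/andP[cP _] /andP[cQ _]].
  by move/eqP: nPQ; apply; exact: (consec_partition_eq Pp Qp cP cQ).
have -> : \bigcup_(P in consec_partition I) inner P = \bigcup_P F P.
  by rewrite big_mkcond.
rewrite big_mkcond /= -sum1_card.
rewrite (partition_disjoint_bigcup _ _ F_disj) leq_sum // => P _.
by rewrite sum1_card /F; case: ifP => // _; exact: card_inner.
Qed.

Lemma inner_neighbours P j : consecutive P -> j \in inner P ->
  [/\ (0 < j)%N, (j.+1 < K)%N &
      forall u : 'I_K, (u <= j.+1)%N -> (j <= u.+1)%N -> u \in P].
Proof.
move=> /consecutiveP cP; rewrite inE => /andP[jP].
case/andP => /existsP[i /andP[iP ij]] /existsP[k /andP[kP jk]].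
split; [lia | have := ltn_ord k; lia | move=> u uj ju].
have [uj' | ju'] := leqP u j.
  by apply: (cP i _ j) => //; apply/andP; split; lia.
by apply: (cP j _ k) => //; apply/andP; split; lia.
Qed.

End ConsecutivePartition.

Local Open Scope ring_scope.

Section ReluInterpolation.
Variables (R : realFieldType) (n : nat) (t y : nat -> R).

Definition slope j := (y j.+1 - y j) / (t j.+1 - t j).

Definition slope_change j := slope j - (if j is j'.+1 then slope j' else 0).

Lemma sum_slope_change i : \sum_(0 <= j < i.+1) slope_change j = slope i.
Proof.
elim: i => [|i IH]; first by rewrite big_nat1 /slope_change subr0.
by rewrite big_nat_recr //= IH /slope_change addrC subrK.
Qed.

Lemma slope_change_eq0 j :
  y j = 0 -> y j.+1 = 0 -> y j.+2 = 0 -> slope_change j.+1 = 0.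
Proof.
by move=> y0 y1 y2; rewrite /slope_change /slope /= y0 y1 y2 subrr !mul0r subrr.
Qed.

(* The last index is never a knot: its ReLU vanishes at every data point. *)
Definition breakpoints : {set 'I_n.+1} :=
  [set j : 'I_n.+1 | (j < n)%N && (slope_change j != 0)].

Lemma card_breakpoints (S : {set 'I_n.+1}) :
  (forall j, j \in S -> (j < n)%N /\ slope_change j = 0) ->
  (#|breakpoints| <= n - #|S|)%N.
Proof.
move=> S_flat.
have B_S_disj : breakpoints :&: S = set0.
  apply/setP => j; rewrite !inE; apply/negbTE/negP => /andP[/andP[_ c_j] jS].
  by move: c_j; rewrite (S_flat j jS).2 eqxx.
have B_S_sub : breakpoints :|: S \subset [set~ ord_max].
  apply/subsetP => j; rewrite !inE -(inj_eq val_inj) /=.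
  by case/orP => [/andP[jn _] | /S_flat[jn _]]; rewrite ltn_eqF.
have := subset_leq_card B_S_sub; rewrite cardsU B_S_disj cards0 cardsC1 card_ord.
lia.
Qed.

Lemma slope_change_inner (I P : {set 'I_n.+1}) j :
  (forall m, (m <= n)%N -> (inord m : 'I_n.+1) \in I -> y m = 0) ->
  P \in consec_partition I -> j \in inner P -> (j < n)%N /\ slope_change j = 0.
Proof.
move=> y_I /consec_partitionP[PI cP _] /(inner_neighbours cP)[j_gt0 j_lt nbP].
split=> //; case: j j_gt0 j_lt nbP => -[|j] _ //= _ j_lt nbP.
have y0 m : (m <= n)%N -> (j <= m <= j.+2)%N -> y m = 0.
  move=> m_n /andP[jm mj]; apply: (y_I _ m_n); apply: (subsetP PI).
  by apply: nbP; rewrite inordK //; lia.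
by apply: slope_change_eq0; apply: y0; lia.
Qed.

Hypothesis t_incr : forall i, (i < n)%N -> t i < t i.+1.

Lemma t_lt i j : (i < j)%N -> (j <= n)%N -> t i < t j.
Proof.
move=> ij jn; apply: (Order.NatMonotonyTheory.homo_ltn_lt_in (D := leq^~ n)) => //.
- by move=> u v _ vn w /andP[_ /ltnW wv]; exact: leq_trans wv vn.
- by move=> k _; exact: t_incr.
- exact: leq_trans (ltnW ij) jn.
Qed.

Lemma relu_t_diff i j : (i <= n)%N -> (j <= n)%N ->
  relu (t i - t j) = if (j < i)%N then t i - t j else 0.
Proof.
move=> i_n j_n; rewrite /relu; case: ltnP => [ji | ij].
  by rewrite max_l // subr_ge0 ltW // t_lt.
rewrite max_r // subr_le0; case: (ltngtP i j) ij => // [ij | ->] _ //.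
exact/ltW/t_lt.
Qed.

Lemma sum_slope_change_linear i : (i <= n)%N ->
  \sum_(0 <= j < i) slope_change j * (t i - t j) = y i - y 0.
Proof.
elim: i => [|i IH] i_n; first by rewrite big_geq // subrr.
have split_diff j : slope_change j * (t i.+1 - t j) =
    slope_change j * (t i.+1 - t i) + slope_change j * (t i - t j) by ring.
rewrite (eq_bigr _ (fun j _ => split_diff j)) big_split /= -big_distrl /=.
rewrite sum_slope_change big_nat_recr //= subrr mulr0 addr0 IH ?(ltnW i_n) //.
rewrite /slope mulfVK; first by ring.
by rewrite subr_eq0 gt_eqF ?t_incr.
Qed.

Lemma relu_interpolation i : (i <= n)%N ->
  \sum_(j < n) slope_change j * relu (t i - t j) + y 0 = y i.
Proof.
move=> i_n; rewrite -(big_mkord xpredT (fun j => slope_change j * relu (t i - t j))).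
rewrite (big_cat_nat (leq0n i) i_n) /= [X in _ + X + _]big1_seq ?addr0; last first.
  move=> j /andP[_]; rewrite mem_index_iota => /andP[ij jn].
  by rewrite relu_t_diff ?ltnNge ?ij ?mulr0 // ltnW.
rewrite -[RHS](subrK (y 0)) -sum_slope_change_linear //; congr (_ + _).
apply: eq_big_nat => j /andP[_ ji]; rewrite relu_t_diff ?ji //; lia.
Qed.

Lemma breakpoints_interpolation i : (i <= n)%N ->
  \sum_(j in breakpoints) slope_change j * relu (t i - t j) + y 0 = y i.
Proof.
move=> i_n; rewrite -[RHS](relu_interpolation i_n); congr (_ + _).
transitivity (\sum_(j < n.+1 | (j < n)%N) slope_change j * relu (t i - t j)).
  rewrite big_mkcond [RHS]big_mkcond; apply: eq_bigr => j _; rewrite inE.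
  by case: (j < n)%N => //=; case: eqP => // ->; rewrite mul0r.
by rewrite big_ord_narrow.
Qed.

End ReluInterpolation.

Lemma net_relu_sum (R : realFieldType) (d : nat) (I : finType) (J : {set I})
    (w b : I -> R) (a : 'cV[R]_d) (b2 : R) (x : 'cV[R]_d) :
  net a (\row_(k < #|J|) w (enum_val k)) (\col_(k < #|J|) b (enum_val k)) b2 x =
  \sum_(j in J) w j * relu (dotv a x + b j) + b2.
Proof.
rewrite /net (big_enum_val (A := mem J) (fun j => w j * relu (dotv a x + b j))).
by congr (_ + _); apply: eq_bigr => k _; rewrite !mxE.
Qed.

Theorem theorem4p6 (R : realFieldType) (K d N : nat) (T : {set 'I_K})
  (x : 'I_K -> 'cV[R]_d) (z : 'I_K -> R) (a : 'cV[R]_d) :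
  (3 <= K)%N -> #|T| = N ->
  (forall i j : 'I_K, (i < j)%N -> dotv a (x i) < dotv a (x j)) ->
  exists (m : nat) (W2 : 'M[R]_(1, m)) (b1 : 'cV[R]_m) (b2 : R),
    (m <= K - 1 - \sum_(P in consec_partition (~: T)) (#|P| - 2))%N /\
    (forall i, i \in T -> net a W2 b1 b2 (x i) = z i) /\
    (forall i, i \notin T -> net a W2 b1 b2 (x i) = 0).
Proof.
move=> K3 _; case: K T x z K3 => [|n] T x z // _ x_incr.
pose t m := dotv a (x (inord m)).
pose y m := if (inord m : 'I_n.+1) \in T then z (inord m) else 0.
have t_incr i : (i < n)%N -> t i < t i.+1.
  by move=> i_n; apply: x_incr; rewrite !inordK //; lia.
have y_notT m : (m <= n)%N -> (inord m : 'I_n.+1) \in ~: T -> y m = 0.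
  by rewrite inE /y => _ /negbTE ->.
pose B := breakpoints n t y.
pose W2 := \row_(k < #|B|) slope_change t y (enum_val k : 'I_n.+1).
pose b1 := \col_(k < #|B|) - t (enum_val k : 'I_n.+1).
exists #|B|, W2, b1, (y 0%N).
have net_y (i : 'I_n.+1) : net a W2 b1 (y 0%N) (x i) = y i.
  have -> : x i = x (inord i) by rewrite inord_val.
  rewrite (net_relu_sum B (fun j => slope_change t y j) (fun j => - t j)).
  by rewrite breakpoints_interpolation // -ltnS.
split; last by split=> i iT; rewrite net_y /y inord_val ?(negbTE iT) ?iT.
rewrite subn1 /=; apply: leq_trans (leq_sub2l _ (sum_consec_partition_le _)).
apply: card_breakpoints => j /bigcupP[P P_part jP].
exact: slope_change_inner y_notT P_part jP.
Qed.
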